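(* Let $f:[0,\infty)\to(0,\infty)$ be twice continuously differentiable with $(f'(x))^2\le f''(x)f(x)$ for all $x\ge0$, and assume the power series $g(x)=\sum_{n=0}^\infty f(n)x^n$ has positive radius of convergence. Then the reciprocal power series has the form $\frac{1}{g(x)}=\frac{1}{f(0)}\Bigl(1-\sum_{n=1}^\infty b_nx^n\Bigr)$ with $b_n\ge0$ for all $n\ge1$; consequently the kernel $K(z,w)=\sum_{n=0}^\infty f(n)z^n\overline w^n$ is a complete Nevanlinna–Pick kernel.
   Context: A positive definite kernel of the form $K(z,w)=\sum_n a_n(z\overline w)^n$ with $a_0>0$ is a complete Nevanlinna–Pick (CNP) kernel when $1/K(z,w)=\frac{1}{a_0}(1-\sum_{n\ge1}b_n(z\overline w)^n)$ with all $b_n\ge0$ (i.e. $1/K$ has one positive square). *)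

From Stdlib Require Import Reals.
From Coquelicot Require Import Coquelicot.
Open Scope R_scope.

(* f : [0,oo) -> R is twice continuously differentiable, with first and second
   derivatives f1, f2.  At the endpoint 0 the derivatives are one-sided (right)
   derivatives and continuity of f2 is continuity within [0,oo). *)
Definition C2_on_nonneg (f f1 f2 : R -> R) : Prop :=
  (forall x, 0 < x -> is_derive f x (f1 x) /\ is_derive f1 x (f2 x)) /\
  filterlim (fun h => (f h - f 0) / h) (at_right 0) (locally (f1 0)) /\
  filterlim (fun h => (f1 h - f1 0) / h) (at_right 0) (locally (f2 0)) /\
  (forall x, 0 < x -> continuous f2 x) /\
  filterlim f2 (at_right 0) (locally (f2 0)).

(* c is the (formal) reciprocal power series of the power series with
   coefficients a:  (sum a_n x^n) * (sum c_n x^n) = 1  coefficientwise. *)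
Definition is_reciprocal_series (a c : nat -> R) : Prop :=
  forall n : nat,
    sum_f_R0 (fun k => a k * c (n - k)%nat) n = if Nat.eqb n 0 then 1 else 0.

Definition one_minus_series (a0 : R) (b : nat -> R) : nat -> R :=
  fun n => if Nat.eqb n 0 then / a0 else - b n / a0.

(* K(z,w) = sum a_n (z wbar)^n with a_0 > 0 is a complete Nevanlinna-Pick
   kernel: 1/K = (1/a_0)(1 - sum_{n>=1} b_n (z wbar)^n) with all b_n >= 0. *)
Definition CNP_kernel (a : nat -> R) : Prop :=
  0 < a 0%nat /\
  exists b : nat -> R,
    (forall n, (1 <= n)%nat -> 0 <= b n) /\
    is_reciprocal_series a (one_minus_series (a 0%nat) b).

From Stdlib Require Import Reals Lra Lia Psatz.
From Coquelicot Require Import Coquelicot.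
Open Scope R_scope.

(* Since (f'/f)' = (f'' f - f'^2) / f^2 >= 0, the function ln f is convex, so the
   coefficients a_n = f(n) are log-convex: a_{n+1}^2 <= a_n a_{n+2}.  Kaluza's lemma
   turns log-convexity into the sign pattern of the reciprocal series: writing
   a_n = sum_{1<=j<=n} b_j a_{n-j}, the ratios a_{m+1}/a_m increase, so
   a_{n+1} (a_{n+2} - sum_{j<=n+1} b_j a_{n+2-j})
     >= a_{n+2} (a_{n+1} - sum_{j<=n+1} b_j a_{n+1-j}) = 0,
   and b_{n+2} >= 0 by induction. *)

Lemma sum_convolution_comm (u v : nat -> R) (n : nat) :
  sum_f_R0 (fun k => u k * v (n - k)%nat) n = sum_f_R0 (fun j => v j * u (n - j)%nat) n.
Proof.
  rewrite <- (sum_f_R0_skip (fun j => v j * u (n - j)%nat) n).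
  apply sum_eq; intros i Hi.
  replace (n - (n - i))%nat with i by lia.
  ring.
Qed.

Section Kaluza.
Variable a : nat -> R.
Hypothesis a_pos : forall n, 0 < a n.
Hypothesis a_log_convex : forall n, a (S n) ^ 2 <= a n * a (S (S n)).

Lemma log_convex_ratio_le m n : (m <= n)%nat -> a (S m) * a n <= a (S n) * a m.
Proof.
  induction 1 as [|n Hmn IH]; [lra|].
  pose proof (a_log_convex n) as L; simpl in L.
  pose proof (a_pos n); pose proof (a_pos (S n)); pose proof (a_pos m).
  pose proof (a_pos (S m)); pose proof (a_pos (S (S n))).
  apply Rmult_le_reg_l with (a n * a (S n)); [nra|].
  assert (a (S m) * a n * (a (S n) * a (S n)) <= a (S n) * a m * (a n * a (S (S n))))
    by (apply Rmult_le_compat; nra).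
  nra.
Qed.

(* [kaluza_prefix n] lists b_0, ..., b_n (and is junk beyond n): carrying all earlier
   values makes the course-of-values recursion structural. *)
Fixpoint kaluza_prefix (n : nat) : nat -> R :=
  match n with
  | O => fun _ => 0
  | S m => fun k =>
      if Nat.leb k m then kaluza_prefix m k
      else (a (S m) - sum_f_R0 (fun j => kaluza_prefix m j * a (S m - j)%nat) m) / a 0%nat
  end.

Definition kaluza_coef (k : nat) : R := kaluza_prefix k k.

Lemma kaluza_prefix_coef n k : (k <= n)%nat -> kaluza_prefix n k = kaluza_coef k.
Proof.
  induction n as [|n IH]; intros Hk.
  - now replace k with 0%nat by lia.
  - destruct (Nat.eq_dec k (S n)) as [->|Hne]; [reflexivity|].
    simpl; replace (Nat.leb k n) with true by (symmetry; apply Nat.leb_le; lia).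
    apply IH; lia.
Qed.

Lemma kaluza_coef_0 : kaluza_coef 0 = 0.
Proof. reflexivity. Qed.

Lemma kaluza_coef_S n :
  kaluza_coef (S n) = (a (S n) - sum_f_R0 (fun j => kaluza_coef j * a (S n - j)%nat) n) / a 0%nat.
Proof.
  unfold kaluza_coef at 1; cbn -[Nat.leb Nat.sub].
  replace (Nat.leb (S n) n) with false by (symmetry; apply Nat.leb_gt; lia).
  do 2 f_equal; apply sum_eq; intros j Hj.
  now rewrite kaluza_prefix_coef by lia.
Qed.

Lemma kaluza_convolution n :
  sum_f_R0 (fun j => kaluza_coef j * a (S n - j)%nat) (S n) = a (S n).
Proof.
  rewrite tech5, kaluza_coef_S, Nat.sub_diag.
  pose proof (a_pos 0); field; lra.
Qed.

Lemma kaluza_coef_nonneg n : 0 <= kaluza_coef n.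
Proof.
  enough (H : forall k, (k <= n)%nat -> 0 <= kaluza_coef k) by (apply H; lia).
  induction n as [|n IH]; intros k Hk.
  { replace k with 0%nat by lia; rewrite kaluza_coef_0; lra. }
  destruct (Nat.eq_dec k (S n)) as [->|Hne]; [|apply IH; lia].
  rewrite kaluza_coef_S.
  pose proof (a_pos 0).
  apply Rmult_le_pos; [|left; apply Rinv_0_lt_compat; lra].
  apply Rge_le, Rge_minus, Rle_ge.
  destruct n as [|n].
  { simpl; rewrite kaluza_coef_0; pose proof (a_pos 1); lra. }
  pose proof (a_pos (S n)); pose proof (a_pos (S (S n))).
  apply Rmult_le_reg_l with (a (S n)); [lra|].
  rewrite <- (kaluza_convolution n) at 2.
  rewrite (Rmult_comm _ (a (S (S n)))), !scal_sum.
  apply sum_Rle; intros j Hj.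
  pose proof (IH j Hj).
  pose proof (log_convex_ratio_le (S n - j) (S n) ltac:(lia)) as Hratio.
  replace (S (S n - j)) with (S (S n) - j)%nat in Hratio by lia.
  nra.
Qed.

Lemma kaluza_reciprocal : is_reciprocal_series a (one_minus_series (a 0%nat) kaluza_coef).
Proof.
  pose proof (a_pos 0).
  intros [|n]; unfold one_minus_series.
  { simpl; field; lra. }
  cbn [Nat.eqb]; rewrite tech5, Nat.sub_diag; cbn [Nat.eqb].
  rewrite (sum_eq _ (fun k => a k * kaluza_coef (S n - k)%nat * (- / a 0%nat))).
  2: { intros i Hi; replace (Nat.eqb (S n - i) 0) with false
         by (symmetry; apply Nat.eqb_neq; lia).
       field; lra. }
  rewrite <- scal_sum.
  assert (Hsum : sum_f_R0 (fun k => a k * kaluza_coef (S n - k)%nat) n = a (S n)).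
  { pose proof (kaluza_convolution n) as Hc.
    rewrite <- sum_convolution_comm, tech5, Nat.sub_diag, kaluza_coef_0 in Hc.
    lra. }
  rewrite Hsum; field; lra.
Qed.

Lemma kaluza_lemma :
  exists b : nat -> R, (forall n, 0 <= b n) /\ is_reciprocal_series a (one_minus_series (a 0%nat) b).
Proof.
  exists kaluza_coef; split; [exact kaluza_coef_nonneg | exact kaluza_reciprocal].
Qed.

End Kaluza.

Lemma mean_value_closed (g dg : R -> R) (p q : R) : p < q ->
  (forall x, p <= x <= q -> is_derive g x (dg x)) ->
  exists c, p <= c <= q /\ g q - g p = dg c * (q - p).
Proof.
  intros Hpq Hg.
  destruct (MVT_gen g p q dg) as [c [Hc E]];
    rewrite ?Rmin_left, ?Rmax_right in * by lra.
  - intros x Hx; apply Hg; lra.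
  - intros x Hx.
    apply continuity_pt_filterlim, (@ex_derive_continuous R_AbsRing R_NormedModule).
    exists (dg x); apply Hg; lra.
  - exists c; auto.
Qed.

Lemma right_continuous_of_right_derivative (g : R -> R) (l : R) :
  filterlim (fun h => (g h - g 0) / h) (at_right 0) (locally l) ->
  filterlim g (at_right 0) (locally (g 0)).
Proof.
  intros Hl.
  assert (Hlim : filterlim (fun h => g 0 + h * ((g h - g 0) / h)) (at_right 0)
                   (locally (g 0 + 0 * l))).
  { eapply filterlim_comp_2;
      [apply filterlim_const| |apply (@filterlim_plus R_AbsRing R_NormedModule)].
    eapply filterlim_comp_2; [|exact Hl|apply (@filterlim_mult R_AbsRing)].
    eapply filterlim_filter_le_1; [apply filter_le_within|apply filterlim_id]. }
  replace (g 0 + 0 * l) with (g 0) in Hlim by ring.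
  eapply filterlim_ext_loc; [|exact Hlim].
  exists (mkposreal 1 Rlt_0_1); intros h _ Hh; simpl.
  field; lra.
Qed.

Section LogConvexity.
Variables f f1 f2 : R -> R.
Hypothesis f_derive : forall x, 0 < x -> is_derive f x (f1 x) /\ is_derive f1 x (f2 x).
Hypothesis f_pos : forall x, 0 < x -> 0 < f x.
Hypothesis f_ineq : forall x, 0 < x -> f1 x ^ 2 <= f2 x * f x.

Lemma log_derivative_nondecreasing p q : 0 < p -> p <= q -> f1 p / f p <= f1 q / f q.
Proof.
  intros Hp Hpq.
  destruct (Req_dec p q) as [->|Hne]; [lra|].
  destruct (mean_value_closed (fun t => f1 t / f t)
              (fun x => (f2 x * f x - f1 x * f1 x) / f x ^ 2) p q) as [c [Hc E]]; [lra| |].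
  - intros x Hx; destruct (f_derive x ltac:(lra)).
    apply is_derive_div; auto.
    apply Rgt_not_eq, f_pos; lra.
  - assert (Hslope : 0 <= (f2 c * f c - f1 c * f1 c) / f c ^ 2).
    { pose proof (f_ineq c ltac:(lra)); pose proof (f_pos c ltac:(lra)).
      apply Rmult_le_pos; [simpl in *; nra|].
      left; apply Rinv_0_lt_compat; nra. }
    assert (0 <= (f2 c * f c - f1 c * f1 c) / f c ^ 2 * (q - p))
      by (apply Rmult_le_pos; lra).
    lra.
Qed.

Lemma is_derive_ln_comp x : 0 < x -> is_derive (fun t => ln (f t)) x (f1 x / f x).
Proof.
  intros Hx.
  exact (is_derive_comp ln f x (/ f x) (f1 x)
           (is_derive_ln _ (f_pos x Hx)) (proj1 (f_derive x Hx))).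
Qed.

Lemma log_convex_midpoint x t : 0 < t < x -> f x ^ 2 <= f (x - t) * f (x + t).
Proof.
  intros Ht.
  destruct (mean_value_closed (fun y => ln (f y)) (fun y => f1 y / f y) (x - t) x)
    as [c1 [Hc1 E1]]; [lra|intros y Hy; apply is_derive_ln_comp; lra|].
  destruct (mean_value_closed (fun y => ln (f y)) (fun y => f1 y / f y) x (x + t))
    as [c2 [Hc2 E2]]; [lra|intros y Hy; apply is_derive_ln_comp; lra|].
  pose proof (log_derivative_nondecreasing c1 c2 ltac:(lra) ltac:(lra)).
  pose proof (f_pos x ltac:(lra)); pose proof (f_pos (x - t) ltac:(lra));
    pose proof (f_pos (x + t) ltac:(lra)).
  assert (Hln : ln (f x * f x) <= ln (f (x - t) * f (x + t)))
    by (rewrite !ln_mult by lra; simpl in E1, E2; nra).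
  apply Rnot_lt_le; intros Hlt.
  apply ln_increasing in Hlt; [simpl in Hlt; rewrite Rmult_1_r in Hlt; lra|nra].
Qed.

Lemma log_convex_endpoint x : 0 < x ->
  filterlim (fun h => (f h - f 0) / h) (at_right 0) (locally (f1 0)) ->
  f x ^ 2 <= f 0 * f (2 * x).
Proof.
  intros Hx Hr.
  assert (Hreflect : filterlim (fun s => 2 * x - s) (at_right 0) (locally (2 * x))).
  { assert (K := @ex_derive_continuous R_AbsRing R_NormedModule (fun s => 2 * x - s) 0
                   ltac:(auto_derive; auto)).
    unfold continuous in K; rewrite Rminus_0_r in K.
    eapply filterlim_filter_le_1; [apply filter_le_within|exact K]. }
  assert (Hf2x : filterlim (fun s => f (2 * x - s)) (at_right 0) (locally (f (2 * x)))).
  { apply (filterlim_comp _ _ _ (fun s => 2 * x - s) f _ _ _ Hreflect).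
    apply (@ex_derive_continuous R_AbsRing R_NormedModule).
    exists (f1 (2 * x)); apply f_derive; lra. }
  assert (Hprod : filterlim (fun s => f s * f (2 * x - s)) (at_right 0)
                    (locally (f 0 * f (2 * x)))).
  { eapply filterlim_comp_2;
      [exact (right_continuous_of_right_derivative f (f1 0) Hr)|exact Hf2x
      |apply (@filterlim_mult R_AbsRing)]. }
  apply (filterlim_le (F := at_right 0)
           (FF := Proper_StrongProper _ (at_right_proper_filter 0))
           (fun _ => f x ^ 2) (fun s => f s * f (2 * x - s)) (f x ^ 2) (f 0 * f (2 * x)));
    [|apply filterlim_const|exact Hprod].
  exists (mkposreal x Hx); intros s Hs Hs0; change R in s.
  apply Rabs_lt_between' in Hs; simpl in Hs.
  pose proof (log_convex_midpoint x (x - s) ltac:(lra)) as Hmid.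
  replace (x - (x - s)) with s in Hmid by ring.
  now replace (x + (x - s)) with (2 * x - s) in Hmid by ring.
Qed.

Lemma log_convex_at_naturals n :
  filterlim (fun h => (f h - f 0) / h) (at_right 0) (locally (f1 0)) ->
  f (INR (S n)) ^ 2 <= f (INR n) * f (INR (S (S n))).
Proof.
  intros Hr; destruct n as [|n].
  - simpl INR; replace (1 + 1) with (2 * 1) by ring.
    exact (log_convex_endpoint 1 Rlt_0_1 Hr).
  - pose proof (pos_INR n); rewrite !S_INR.
    pose proof (log_convex_midpoint (INR n + 1 + 1) 1 ltac:(lra)) as Hmid.
    now replace (INR n + 1 + 1 - 1) with (INR n + 1) in Hmid by ring.
Qed.

End LogConvexity.

Theorem theorem9p6 (f f1 f2 : R -> R) :
  C2_on_nonneg f f1 f2 ->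
  (forall x, 0 <= x -> 0 < f x) ->
  (forall x, 0 <= x -> (f1 x) ^ 2 <= f2 x * f x) ->
  Rbar_lt (Finite 0) (CV_radius (fun n : nat => f (INR n))) ->
  (exists b : nat -> R,
      (forall n, (1 <= n)%nat -> 0 <= b n) /\
      is_reciprocal_series (fun n : nat => f (INR n)) (one_minus_series (f 0) b)) /\
  CNP_kernel (fun n : nat => f (INR n)).
Proof.
  intros [Hderiv [Hright _]] Hpos Hineq _.
  assert (Ha_pos : forall n, 0 < f (INR n)) by (intros n; apply Hpos, pos_INR).
  assert (Ha_log_convex : forall n, f (INR (S n)) ^ 2 <= f (INR n) * f (INR (S (S n)))).
  { intros n; apply (log_convex_at_naturals f f1 f2); auto;
      intros x Hx; [apply Hpos|apply Hineq]; lra. }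
  destruct (kaluza_lemma (fun n => f (INR n)) Ha_pos Ha_log_convex) as [b [Hb Hrec]].
  split; [|split; [apply Ha_pos|]]; exists b; split; auto.
Qed.
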